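(* Let $(N^\circ,M^\circ,L^\circ)\in OLag(V)^3$ be pairwise in general position, and let $r^L:M\to N$ be the linear map determined by $r^L(m)-m\in L$ for all $m\in M$, with induced map $r^L_\wedge:\bigwedge^nM\to\bigwedge^nN$. Then $$F_{N^\circ,M^\circ}\circ F_{M^\circ,L^\circ}=C\cdot F_{N^\circ,L^\circ},\qquad C=\sum_{m\in M}\psi\big(\tfrac12\omega(r^L(m),m)\big)=G_1^{\,n}\,\sigma\Big((-1)^{n(n-1)/2}\,\omega_\wedge\big(r^L_\wedge(o_M),o_M\big)\Big).$$
   Context: Let $p$ be an odd prime, $q$ a power of $p$, and $(V,\omega)$ a symplectic vector space of dimension $2n$ over $\mathbb F_q$. The Heisenberg group $H(V)$ is the set $V\times\mathbb F_q$ with multiplication $(v,z)\cdot(v',z')=(v+v',z+z'+\tfrac12\omega(v,v'))$. Fix a non-trivial character $\psi:\mathbb F_q\to\mathbb C^\times$. An oriented Lagrangian is a pair $L^\circ=(L,o_L)$ with $L\subset V$ Lagrangian and $o_L\in\bigwedge^nL$ nonzero; $OLag(V)$ is the set of these. For $L^\circ\in OLag(V)$, $\mathcal H_{L^\circ}$ is the space of functions $f:H(V)\to\mathbb C$ with $f((0,z)\cdot(l,0)\cdot h)=\psi(z)f(h)$ for all $z\in\mathbb F_q,l\in L,h\in H(V)$. Lagrangians $M,L$ are in general position if $M+L=V$. For $(M^\circ,L^\circ)$ in general position, $F_{M^\circ,L^\circ}:\mathcal H_{L^\circ}\to\mathcal H_{M^\circ}$ is $F_{M^\circ,L^\circ}[f](h)=\sum_{m\in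 M}f((m,0)\cdot h)$. For a $2k$-dimensional symplectic space $(W,\omega)$ and Lagrangians $A,B\subset W$, $\omega_\wedge:\bigwedge^kA\times\bigwedge^kB\to\mathbb F_q$ is $\omega_\wedge(a_1\wedge\dots\wedge a_k,b_1\wedge\dots\wedge b_k)=(-1)^{k(k-1)/2}\det(\omega(a_i,b_j))_{i,j}$. $\sigma$ is the Legendre character of $\mathbb F_q^\times$ and $G_1=\sum_{z\in\mathbb F_q}\psi(\tfrac12 z^2)$. *)

From HB Require Import structures.
From mathcomp Require Import all_boot all_order all_algebra all_field.
Set Implicit Arguments. Unset Strict Implicit. Unset Printing Implicit Defensive.
Import Order.TTheory GRing.Theory Num.Theory.
Local Open Scope ring_scope.

(* V = 'rV[F]_(n + n) (row vectors), with symplectic form given by a matrix Om: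
   omega u v = u Om v^T. *)
Definition omega (F : fieldType) (n : nat) (Om : 'M[F]_(n + n))
  (u v : 'rV[F]_(n + n)) : F := (u *m Om *m v^T) 0 0.

Definition symplectic_form (F : fieldType) (n : nat) (Om : 'M[F]_(n + n)) : Prop :=
  (forall v, omega Om v v = 0) /\ \det Om != 0.

(* An oriented Lagrangian (L, o_L) is represented by an n x 2n matrix B whose
   rows b_1..b_n form a basis of L (row space of B), with o_L = b_1 /\ ... /\ b_n.
   Every nonzero element of /\^n L is of this form. *)
Definition olag (F : fieldType) (n : nat) (Om : 'M[F]_(n + n))
  (B : 'M[F]_(n, n + n)) : Prop :=
  row_free B /\ B *m Om *m B^T = 0.

Definition gen_pos (F : fieldType) (n : nat) (A B : 'M[F]_(n, n + n)) : Prop :=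
  ((A + B)%MS == 1%:M :> 'M[F]_(n + n))%MS.

Definition hmul (F : fieldType) (n : nat) (Om : 'M[F]_(n + n))
  (x y : 'rV[F]_(n + n) * F) : 'rV[F]_(n + n) * F :=
  (x.1 + y.1, x.2 + y.2 + 2^-1 * omega Om x.1 y.1).

Definition nontrivial_char (F : fieldType) (psi : F -> algC) : Prop :=
  psi 0 = 1 /\ (forall x y, psi (x + y) = psi x * psi y) /\ (exists x, psi x != 1).

(* f in H_{L°} (depends only on the row space of L) *)
Definition inH (F : fieldType) (n : nat) (Om : 'M[F]_(n + n)) (psi : F -> algC)
  (L : 'M[F]_(n, n + n)) (f : 'rV[F]_(n + n) * F -> algC) : Prop :=
  forall (z : F) (l : 'rV[F]_(n + n)) (h : 'rV[F]_(n + n) * F),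
    (l <= L)%MS -> f (hmul Om (hmul Om (0, z) (l, 0)) h) = psi z * f h.

Definition Fop (F : finFieldType) (n : nat) (Om : 'M[F]_(n + n))
  (M : 'M[F]_(n, n + n)) (f : 'rV[F]_(n + n) * F -> algC)
  (h : 'rV[F]_(n + n) * F) : algC :=
  \sum_(m : 'rV[F]_(n + n) | (m <= M)%MS) f (hmul Om (m, 0) h).

Definition sgnk (F : fieldType) (k : nat) : F := (-1) ^+ ((k * k.-1)./2).

(* omega_wedge (a_1/\../\a_k, b_1/\../\b_k) = (-1)^(k(k-1)/2) det(omega(a_i,b_j)),
   with the a_i (resp. b_j) the rows of A (resp. B). *)
Definition omega_wedge (F : fieldType) (n k : nat) (Om : 'M[F]_(n + n))
  (A B : 'M[F]_(k, n + n)) : F :=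
  sgnk F k * \det (A *m Om *m B^T).

Definition legendre (F : finFieldType) (x : F) : algC :=
  if x == 0 then 0 else if [exists y : F, y ^+ 2 == x] then 1 else -1.

Definition G1 (F : finFieldType) (psi : F -> algC) : algC :=
  \sum_(z : F) psi (2^-1 * z ^+ 2).

From HB Require Import structures.
From mathcomp Require Import all_boot all_order all_algebra all_field perm ring.
Import Order.TTheory GRing.Theory Num.Theory.
Set Implicit Arguments. Unset Strict Implicit. Unset Printing Implicit Defensive.
Local Open Scope ring_scope.

(* Writing (m,0)(v,0) = (0, omega(r m, m)/2) (m - r m, 0)
      (r m + v, 0) with r = r^L, m - r m in L and r m + v in N, the invariance
      of f in H_L pulls out psi(omega(r m, m)/2); re-centering the sum over
      v in N gives F_{N,M} F_{M,L} = C F_{N,L}, C = sum_m psi(omega(r m, m)/2).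
   2. The constant. In the basis of M given by the rows of M, the form
      m |-> omega(r m, m) has Gram matrix G = R Om M^T (R = matrix of r);
      G is symmetric because N, M, L are Lagrangian, and nondegenerate because
      N + M = V and M meets L trivially. So C is the quadratic Gauss sum of G.
   3. Quadratic Gauss sums. Diagonalizing G by congruence (possible since
      2 != 0), the sum factors into one-dimensional sums
      sum_t psi(a t^2 / 2) = legendre(a) G_1, which uses that the Legendre
      symbol is multiplicative; hence C = G_1^n legendre(det G).
   Finally omega_wedge(r(o_M), o_M) = (-1)^(n(n-1)/2) det G. *)

Section LegendreSymbol.
Variable F : finFieldType.
Hypothesis two_neq0 : (2 : F) != 0.

Definition is_square (x : F) : bool := [exists y, y ^+ 2 == x].

Definition squares : {set F} := [set x | (x != 0) && is_square x].
Definition nonsquares : {set F} := [set x | (x != 0) && ~~ is_square x].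

Lemma legendreE (x : F) :
  legendre x = if x == 0 then 0 else if is_square x then 1 else -1.
Proof. by []. Qed.

Definition sqrt_count (u : F) : nat := #|[set t : F | t ^+ 2 == u]|.

Lemma neq_oppr (s : F) : s != 0 -> s != - s.
Proof.
move=> s0; apply/eqP => ssN; move: (mulf_neq0 two_neq0 s0).
by rewrite mulr_natl mulr2n {2}ssN subrr eqxx.
Qed.

(* u has 1 + legendre(u) square roots; the two roots of a nonzero square
   are distinct because 2 != 0. *)
Lemma sqrt_countE (u : F) : (sqrt_count u)%:R = 1 + legendre u :> algC.
Proof.
rewrite legendreE /sqrt_count; have [->|u0] := eqVneq u 0.
  rewrite (_ : [set t | _] = [set 0]) ?cards1 ?addr0 //.
  by apply/setP => t; rewrite !inE sqrf_eq0.
case: ifPn => [/existsP[s /eqP su] | nsq_u].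
  have s0 : s != 0 by apply: contraNneq u0 => s0; rewrite -su s0 expr0n.
  rewrite -su (_ : [set t | _] = [set s; - s]); last first.
    by apply/setP => t; rewrite !inE eqf_sqr.
  by rewrite cards2 neq_oppr.
rewrite subrr (_ : [set t | _] = set0) ?cards0 //.
apply/setP => t; rewrite !inE; apply: contraNF nsq_u => tu.
by apply/existsP; exists t.
Qed.

(* Counting every t by its square. *)
Lemma sum_sqrt_count : (\sum_(u : F) sqrt_count u)%N = #|F|.
Proof.
rewrite -sum1_card [RHS](partition_big (fun t : F => t ^+ 2) predT) //=.
by apply: eq_bigr => u _; rewrite sum1dep_card.
Qed.

(* Summing sqrt_countE over F: there are as many squares as nonsquares. *)
Lemma sum_legendre : \sum_(u : F) legendre u = 0.
Proof.
have := congr1 (GRing.natmul (1 : algC)) sum_sqrt_count.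
rewrite -sum1_card !natr_sum (eq_bigr _ (fun u _ => sqrt_countE u)) big_split /=.
move=> sumE; apply: (addrI (\sum_(u : F) 1)); rewrite addr0 sumE.
by apply: eq_bigl => u; rewrite inE.
Qed.

Lemma card_squares : #|squares| = #|nonsquares|.
Proof.
have legE u : legendre u =
    (if u \in squares then 1 else 0) - (if u \in nonsquares then 1 else 0).
  by rewrite legendreE !inE; case: eqP; case: is_square; rewrite ?subr0 ?sub0r.
apply/eqP; rewrite -(eqr_nat algC) -subr_eq0 -sum_legendre.
by rewrite (eq_bigr _ (fun u _ => legE u)) sumrB -!big_mkcond /= !sumr_const.
Qed.

Lemma is_square_sqr_mul (c x : F) : c != 0 -> is_square (c ^+ 2 * x) = is_square x.
Proof.
move=> c0; apply/existsP/existsP => [[y /eqP yE] | [y /eqP <-]].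
  by exists (c^-1 * y); rewrite exprMn yE mulrA -exprMn mulVf ?expr1n ?mul1r.
by exists (c * y); rewrite exprMn.
Qed.

Lemma legendre_sqr_mul (c x : F) : c != 0 -> legendre (c ^+ 2 * x) = legendre x.
Proof.
move=> c0; rewrite !legendreE is_square_sqr_mul // mulf_eq0 expf_eq0 (negPf c0).
by rewrite andbF.
Qed.

Lemma legendre_sqr (c : F) : c != 0 -> legendre (c ^+ 2) = 1.
Proof.
move=> c0; rewrite -[c ^+ 2]mulr1 legendre_sqr_mul // legendreE oner_eq0.
by rewrite (_ : is_square 1) //; apply/existsP; exists 1; rewrite expr1n.
Qed.

(* Since #|squares| = #|nonsquares|, scaling by a nonsquare a maps squares
   onto nonsquares; hence the product of two nonsquares is a square. *)
Lemma nonsquare_mul (a b : F) :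
  a \in nonsquares -> b \in nonsquares -> is_square (a * b).
Proof.
move=> aN bN; have /setIdP[a0 nsq_a] := aN.
have sqN : [set a * x | x in squares] \subset nonsquares.
  apply/subsetP => _ /imsetP[x /setIdP[x0 /existsP[s /eqP sx]] ->].
  have s0 : s != 0 by apply: contraNneq x0 => s0; rewrite -sx s0 expr0n.
  by rewrite inE mulf_neq0 // -sx mulrC is_square_sqr_mul.
have cardE : #|[set a * x | x in squares]| = #|nonsquares|.
  by rewrite card_imset ?card_squares //; apply: mulfI.
have := elimT (subset_cardP cardE) sqN b; rewrite bN.
case/imsetP=> _ /setIdP[_ /existsP[s /eqP <-]] ->.
by apply/existsP; exists (a * s); rewrite mulrA -expr2 exprMn.
Qed.

Lemma legendreM (a b : F) : legendre (a * b) = legendre a * legendre b.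
Proof.
have [->|a0] := eqVneq a 0; first by rewrite mul0r !legendreE eqxx mul0r.
have [->|b0] := eqVneq b 0; first by rewrite mulr0 !legendreE eqxx mulr0.
have [/existsP[c /eqP ca]|nsq_a] := boolP (is_square a).
  have c0 : c != 0 by apply: contraNneq a0 => c0; rewrite -ca c0 expr0n.
  by rewrite -ca legendre_sqr_mul // legendre_sqr // mul1r.
have [/existsP[c /eqP cb]|nsq_b] := boolP (is_square b).
  have c0 : c != 0 by apply: contraNneq b0 => c0; rewrite -cb c0 expr0n.
  by rewrite -cb mulrC legendre_sqr_mul // legendre_sqr // mulr1.
rewrite !legendreE mulf_eq0 (negPf a0) (negPf b0) (negPf nsq_a) (negPf nsq_b).
by rewrite nonsquare_mul ?mulrNN ?mulr1 // inE ?a0 ?b0.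
Qed.

Lemma legendreV (a : F) : legendre a^-1 = legendre a.
Proof.
have [->|a0] := eqVneq a 0; first by rewrite invr0.
have ai0 : a^-1 != 0 by rewrite invr_eq0.
have -> : a^-1 = a^-1 ^+ 2 * a by rewrite expr2 -mulrA mulVf // mulr1.
exact: legendre_sqr_mul.
Qed.

End LegendreSymbol.

Section GaussSums.
Variables (F : finFieldType) (psi : F -> algC).
Hypothesis two_neq0 : (2 : F) != 0.
Hypothesis psi_char : nontrivial_char psi.

Lemma sum_char : \sum_(t : F) psi t = 0.
Proof.
have [_ [psiD [x0 psi_x0]]] := psi_char.
have : \sum_t psi t = psi x0 * \sum_t psi t.
  by rewrite [LHS](reindex_inj (addrI x0)) mulr_sumr; apply: eq_bigr => t _; rewrite psiD.
move/eqP; rewrite -subr_eq0 -{1}[\sum_t _]mul1r -mulrBl mulf_eq0 subr_eq0 eq_sym.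
by rewrite (negPf psi_x0) => /eqP.
Qed.

Lemma sum_char_scale (c : F) : c != 0 -> \sum_(t : F) psi (c * t) = 0.
Proof. by move=> c0; rewrite -[RHS]sum_char [RHS](reindex_inj (mulfI c0)). Qed.

(* Counting the square roots: the quadratic Gauss sum is a twisted sum. *)
Lemma gauss_sum_legendre (c : F) : c != 0 ->
  \sum_(t : F) psi (c * t ^+ 2) = \sum_(u : F) psi (c * u) * legendre u.
Proof.
move=> c0; rewrite (partition_big (fun t : F => t ^+ 2) predT) //=.
transitivity (\sum_(u : F) psi (c * u) * (sqrt_count u)%:R).
  apply: eq_bigr => u _; rewrite (eq_bigr (fun _ => psi (c * u))) => [|t /eqP -> //].
  by rewrite sumr_const mulr_natr /sqrt_count cardsE.
rewrite (eq_bigr (fun u => psi (c * u) + psi (c * u) * legendre u)) => [|u _].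
  by rewrite big_split /= sum_char_scale ?add0r.
by rewrite sqrt_countE // mulrDr mulr1.
Qed.

(* The one-dimensional Gauss sum: sum_t psi(a t^2 / 2) = legendre(a) G_1,
   by substituting u |-> u / a in the twisted sum. *)
Lemma gauss_quadratic (a : F) : a != 0 ->
  \sum_(t : F) psi (2^-1 * (a * t ^+ 2)) = legendre a * G1 psi.
Proof.
move=> a0; have h0 : (2^-1 : F) != 0 by rewrite invr_eq0.
have ha0 : 2^-1 * a != 0 by rewrite mulf_neq0.
under eq_bigr do rewrite mulrA.
rewrite /G1 !gauss_sum_legendre // (reindex_inj (mulfI (_ : a^-1 != 0))) ?invr_eq0 //=.
rewrite mulr_sumr; apply: eq_bigr => v _.
by rewrite -mulrA (mulrA a) mulfV // mul1r legendreM // legendreV mulrCA.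
Qed.

End GaussSums.

Lemma sum_row_mx (F : finFieldType) (R : nmodType) m k (f : 'rV[F]_(m + k) -> R) :
  \sum_(x : 'rV[F]_(m + k)) f x = \sum_(u : 'rV[F]_m) \sum_(w : 'rV[F]_k) f (row_mx u w).
Proof.
rewrite pair_big /= (reindex (fun p : 'rV[F]_m * 'rV[F]_k => row_mx p.1 p.2)) //=.
exists (fun x => (lsubmx x, rsubmx x)) => [[u w] _ | x _] /=.
  by rewrite row_mxKl row_mxKr.
by rewrite hsubmxK.
Qed.

Lemma sum_rV1 (F : finFieldType) (R : nmodType) (f : 'rV[F]_1 -> R) :
  \sum_(x : 'rV[F]_1) f x = \sum_(t : F) f (const_mx t).
Proof.
rewrite (reindex (fun t : F => (const_mx t : 'rV[F]_1))) //=.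
exists (fun x : 'rV[F]_1 => x 0 0) => [t _ | x _] /=; first by rewrite mxE.
by apply/matrixP => i j; rewrite !mxE !ord1.
Qed.

Lemma sum_submx_shift (F : finFieldType) (R : nmodType) m k
    (N : 'M[F]_(k, m)) (r : 'rV[F]_m) (g : 'rV[F]_m -> R) :
  (r <= N)%MS ->
  \sum_(v : 'rV[F]_m | (v <= N)%MS) g v = \sum_(v : 'rV[F]_m | (v <= N)%MS) g (r + v).
Proof.
move=> rN; rewrite [LHS](reindex_inj (addrI r)); apply: eq_bigl => v /=.
apply/idP/idP => [rvN | vN]; last exact: addmx_sub.
by rewrite -(addKr r v) addmx_sub // eqmx_opp.
Qed.

Lemma sum_submx_coord (F : finFieldType) (R : nmodType) k m (M : 'M[F]_(k, m))
    (g : 'rV[F]_m -> R) :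
  row_free M -> \sum_(v : 'rV[F]_m | (v <= M)%MS) g v = \sum_(x : 'rV[F]_k) g (x *m M).
Proof.
move=> freeM; rewrite (reindex (fun x : 'rV[F]_k => x *m M)) /=.
  by apply: eq_bigl => x; rewrite submxMl.
exists (fun v => v *m pinvmx M) => [x _ | v vM] /=; last by rewrite mulmxKpV.
by apply: (row_free_inj freeM); rewrite mulmxKpV // submxMl.
Qed.

Section SymmetricCongruence.
Variable F : fieldType.
Hypothesis two_neq0 : (2 : F) != 0.

Lemma quad_delta k (G : 'M[F]_k) (i j : 'I_k) :
  ((delta_mx 0 i : 'rV[F]_k) *m G *m (delta_mx 0 j : 'rV[F]_k)^T) 0 0 = G i j.
Proof. by rewrite -rowE trmx_delta -colE !mxE. Qed.

Lemma congr_diag k (P G : 'M[F]_k) i :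
  (P *m G *m P^T) i i = (row i P *m G *m (row i P)^T) 0 0.
Proof. by rewrite tr_row -row_mul !mxE; apply: eq_bigr => j _; rewrite !mxE. Qed.

Lemma addmx_entry m n (A B : 'M[F]_(m, n)) i j : (A + B) i j = A i j + B i j.
Proof. by rewrite mxE. Qed.

(* An invertible symmetric matrix is congruent to one with a nonzero pivot:
   either some diagonal entry is nonzero (permute it to the corner), or some
   G 0 j is nonzero and the shear 1 + E_0j gives the corner 2 G 0 j. *)
Lemma sym_pivot k (G : 'M[F]_k.+1) : G^T = G -> G \in unitmx ->
  exists2 P : 'M_k.+1, P \in unitmx & (P *m G *m P^T) 0 0 != 0.
Proof.
move=> symG uG.
have [i Gii | Gdiag0] := pickP (fun i => G i i != 0).
  exists (perm_mx (tperm 0 i)); first exact: unitmx_perm.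
  by rewrite tr_perm_mx -col_permE -row_permE !mxE tpermL.
have {}Gdiag0 i : G i i = 0 by apply/eqP; move: (Gdiag0 i) => /= /negbFE.
have [j G0j] : exists j, G 0 j != 0.
  apply/existsP; apply: contraT => /existsPn G0.
  have : (delta_mx 0 0 : 'rV[F]_k.+1) *m G = 0.
    by apply/rowP => l; rewrite -rowE !mxE; apply/eqP; rewrite -[_ == _]negbK G0.
  move/(congr1 (mulmx^~ (invmx G))); rewrite -mulmxA mulmxV // mulmx1 mul0mx.
  by move/matrixP => /(_ 0 0); rewrite !mxE eqxx => /eqP; rewrite oner_eq0.
have j0 : j != 0 by apply: contraNneq G0j => ->; rewrite Gdiag0.
pose E : 'M[F]_k.+1 := delta_mx 0 j.
exists (1%:M + E).
  suff /mulmx1_unit[] : (1%:M + E) *m (1%:M - E) = 1%:M by [].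
  by rewrite mulmxDl mul1mx mulmxBr mulmx1 /E mul_delta_mx_cond (negPf j0) mulr0n subr0 subrK.
rewrite congr_diag linearD /= row1 rowE mul_delta_mx linearD /= !mulmxDl !mulmxDr.
rewrite !addmx_entry !quad_delta !Gdiag0 add0r addr0.
have -> : G j 0 = G 0 j by rewrite -{1}symG mxE.
by rewrite -mulr2n -mulr_natr mulf_neq0.
Qed.

(* Schur complement: clearing the first row and column of a symmetric matrix
   with invertible corner by a congruence. *)
Lemma sym_schur k (H : 'M[F]_(1 + k)) : H^T = H -> H 0 0 != 0 ->
  exists2 Q : 'M_(1 + k), Q \in unitmx &
    exists E : 'M_k, Q *m H *m Q^T = block_mx (H 0 0)%:M 0 0 E.
Proof.
move=> symH H00.
set A := ulsubmx H; set B := ursubmx H; set C := dlsubmx H; set E := drsubmx H.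
have AE : A = (H 0 0)%:M.
  by rewrite [LHS]mx11_scalar !mxE; congr (_%:M); congr (H _ _); apply: val_inj.
have uA : A \in unitmx by rewrite AE unitmxE det_scalar expr1 unitfE.
have CtE : C^T = B by rewrite /C trmx_dlsub symH.
exists (block_mx 1%:M 0 (- (C *m invmx A)) 1%:M).
  by rewrite unitmxE det_lblock !det1 mulr1 unitr1.
exists (E - C *m invmx A *m B).
rewrite -[H in LHS]submxK -/A -/B -/C -/E tr_block_mx !mulmx_block.
rewrite !trmx1 !trmx0 !mul1mx !mul0mx !mulmx1 !mulmx0 !addr0.
have -> : - (C *m invmx A) *m A + C = 0.
  by rewrite mulNmx -mulmxA mulVmx // mulmx1 addNr.
have -> : A *m (- (C *m invmx A))^T + B = 0.
  rewrite linearN /= trmx_mul CtE trmx_inv AE tr_scalar_mx -AE.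
  by rewrite mulmxN mulmxA mulmxV // mul1mx addNr.
by rewrite mul0mx add0r -AE mulNmx addrC.
Qed.

Lemma sym_split k (G : 'M[F]_(1 + k)) : G^T = G -> G \in unitmx ->
  exists P : 'M_(1 + k), exists a : F, exists E : 'M_k,
    [/\ P \in unitmx, a != 0, E^T = E, E \in unitmx
      & P *m G *m P^T = block_mx a%:M 0 0 E].
Proof.
move=> symG uG; have [P uP H00] := sym_pivot symG uG.
set H := P *m G *m P^T in H00.
have symH : H^T = H by rewrite /H !trmx_mul trmxK symG mulmxA.
have [Q uQ [E QHE]] := sym_schur symH H00.
have QHQt : (Q *m P) *m G *m (Q *m P)^T = Q *m H *m Q^T.
  by rewrite /H trmx_mul !mulmxA.
have uQH : Q *m H *m Q^T \in unitmx.
  by rewrite /H !unitmx_mul uQ uP uG !unitmx_tr uP uQ.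
exists (Q *m P), (H 0 0), E; split => //; last by rewrite QHQt.
- by rewrite unitmx_mul uQ.
- have : (Q *m H *m Q^T)^T = Q *m H *m Q^T by rewrite trmx_mul (trmx_mul Q H) trmxK symH mulmxA.
  by rewrite QHE tr_block_mx => /(congr1 drsubmx); rewrite !block_mxKdr.
- by move: uQH; rewrite QHE !unitmxE det_ublock unitrM => /andP[].
Qed.

End SymmetricCongruence.

Section QuadraticGaussSums.
Variables (F : finFieldType) (psi : F -> algC).
Hypothesis two_neq0 : (2 : F) != 0.
Hypothesis psi_char : nontrivial_char psi.

Definition quad_sum k (G : 'M[F]_k) : algC :=
  \sum_(x : 'rV[F]_k) psi (2^-1 * (x *m G *m x^T) 0 0).

Lemma quad_sum_congr k (P G : 'M[F]_k) :
  P \in unitmx -> quad_sum (P *m G *m P^T) = quad_sum G.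
Proof.
move=> uP; rewrite /quad_sum [RHS](reindex_inj (can_inj (mulmxK uP))) /=.
by apply: eq_bigr => x _; rewrite trmx_mul !mulmxA.
Qed.

Lemma legendre_det_congr k (P G : 'M[F]_k) :
  P \in unitmx -> legendre (\det (P *m G *m P^T)) = legendre (\det G).
Proof.
move=> uP; rewrite !det_mulmx det_tr mulrC mulrA -expr2 legendre_sqr_mul //.
by rewrite -unitfE -unitmxE.
Qed.

Lemma quad_sum_block k (a : F) (E : 'M[F]_k) :
  quad_sum (block_mx a%:M 0 0 E : 'M_(1 + k)) =
  (\sum_(t : F) psi (2^-1 * (a * t ^+ 2))) * quad_sum E.
Proof.
have [psi0 [psiD _]] := psi_char.
rewrite /quad_sum sum_row_mx sum_rV1 mulr_suml; apply: eq_bigr => t _.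
rewrite mulr_sumr; apply: eq_bigr => w _.
rewrite mul_row_block tr_row_mx mul_row_col !mulmx0 addr0 add0r addmx_entry.
rewrite mulrDr psiD; congr (psi (2^-1 * _) * _).
by rewrite !mxE big_ord1 !mxE big_ord1 !mxE eqxx mulr1n -mulrA mulrCA -expr2.
Qed.

Theorem quad_sum_eval k (G : 'M[F]_k) : G^T = G -> G \in unitmx ->
  quad_sum G = G1 psi ^+ k * legendre (\det G).
Proof.
have [psi0 _] := psi_char.
elim: k G => [|k IHk]; rewrite -?[k.+1]/(1 + k)%N => G symG uG.
  rewrite /quad_sum (eq_bigr (fun _ => 1)) => [|x _]; last first.
    by rewrite !mxE big_ord0 mulr0 psi0.
  rewrite sumr_const card_mx muln0 expn0 det_mx00 expr0 mul1r.
  by rewrite -(expr1n F 2) legendre_sqr ?oner_eq0.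
have [P [a [E [uP a0 symE uE PGP]]]] := sym_split two_neq0 symG uG.
rewrite -(quad_sum_congr G uP) -(legendre_det_congr G uP) PGP quad_sum_block.
rewrite gauss_quadratic // IHk // det_ublock det_scalar expr1 legendreM //.
rewrite exprS [legendre a * _]mulrC -!mulrA; congr (_ * _); exact: mulrCA.
Qed.

End QuadraticGaussSums.

Section SymplecticGeometry.
Variables (F : fieldType) (n : nat) (Om : 'M[F]_(n + n)).
Notation V := 'rV[F]_(n + n).
Notation om := (omega Om).

Lemma omegaDl (u v w : V) : om (u + v) w = om u w + om v w.
Proof. by rewrite /omega !mulmxDl addmx_entry. Qed.

Lemma omegaDr (u v w : V) : om u (v + w) = om u v + om u w.
Proof. by rewrite /omega linearD /= mulmxDr addmx_entry. Qed.

Lemma omegaNl (u v : V) : om (- u) v = - om u v.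
Proof. by rewrite /omega !mulNmx mxE. Qed.

Lemma omega0l (v : V) : om 0 v = 0.
Proof. by rewrite /omega !mul0mx mxE. Qed.

Hypothesis omega_alt : forall v : V, om v v = 0.

Lemma omega_skew (u v : V) : om u v = - om v u.
Proof.
apply/eqP; rewrite -addr_eq0; have := omega_alt (u + v).
by rewrite omegaDl !omegaDr !omega_alt add0r addr0 => ->.
Qed.

Lemma tr_Om : Om^T = - Om.
Proof.
apply/matrixP => i j; rewrite !mxE.
by have := omega_skew (delta_mx 0 j) (delta_mx 0 i); rewrite /omega !quad_delta => ->.
Qed.

Lemma lagrangian_pair (N : 'M[F]_(n, n + n)) m1 m2
    (A : 'M_(m1, n + n)) (B : 'M_(m2, n + n)) :
  N *m Om *m N^T = 0 -> (A <= N)%MS -> (B <= N)%MS -> A *m Om *m B^T = 0.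
Proof.
move=> lagN /submxP[X ->] /submxP[Y ->].
by rewrite trmx_mul !mulmxA -(mulmxA X) -(mulmxA X) lagN mulmx0 mul0mx.
Qed.

Lemma lagrangian_omega (N : 'M[F]_(n, n + n)) (u v : V) :
  N *m Om *m N^T = 0 -> (u <= N)%MS -> (v <= N)%MS -> om u v = 0.
Proof. by move=> lagN uN vN; rewrite /omega (lagrangian_pair lagN uN vN) mxE. Qed.

End SymplecticGeometry.

Lemma gen_pos_cap (F : fieldType) n (A B : 'M[F]_(n, n + n)) m (v : 'M_(m, n + n)) :
  row_free A -> row_free B -> gen_pos A B -> (v <= A)%MS -> (v <= B)%MS -> v = 0.
Proof.
move=> freeA freeB genAB vA vB.
have := mxrank_sum_cap A B; rewrite (eqP genAB) mxrank1 (eqP freeA) (eqP freeB).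
rewrite -[X in _ = X]addn0 => /eqP; rewrite eqn_add2l mxrank_eq0 => /eqP capAB.
by apply/eqP; rewrite -submx0 -capAB sub_capmx vA vB.
Qed.

Lemma hmulA (F : fieldType) n (Om : 'M[F]_(n + n)) (x y z : 'rV[F]_(n + n) * F) :
  hmul Om (hmul Om x y) z = hmul Om x (hmul Om y z).
Proof.
case: x y z => [x1 x2] [y1 y2] [z1 z2]; rewrite /hmul /=.
congr pair; first by rewrite addrA.
by rewrite omegaDl omegaDr !mulrDr; ring.
Qed.

(* In H(V): (m,0)(v,0) = (0, omega(r,m)/2) (m - r, 0) (r + v, 0) for r, v in a
   Lagrangian N; this moves the M-component of (m,0) into L and N. *)
Lemma heisenberg_factor (F : fieldType) n (Om : 'M[F]_(n + n))
    (N : 'M[F]_(n, n + n)) (m r v : 'rV[F]_(n + n)) :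
  (forall u, omega Om u u = 0) -> N *m Om *m N^T = 0 ->
  (r <= N)%MS -> (v <= N)%MS ->
  hmul Om (m, 0) (v, 0) =
  hmul Om (hmul Om (0, 2^-1 * omega Om r m) (m - r, 0)) (r + v, 0).
Proof.
move=> alt lagN rN vN; rewrite /hmul /=.
congr pair; first by rewrite add0r addrA subrK.
rewrite !(omegaDl, omegaDr, omegaNl, omega0l) alt (lagrangian_omega lagN rN vN).
by rewrite (omega_skew alt r m); ring.
Qed.

Lemma sgnk_involutive (F : fieldType) k (x : F) : sgnk F k * (sgnk F k * x) = x.
Proof. by rewrite /sgnk mulrA -exprD addnn -mul2n exprM sqrrN !expr1n mul1r. Qed.

Section LagrangianTriple.
Variables (F : finFieldType) (n : nat) (Om : 'M[F]_(n + n)).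
Variables (N M L : 'M[F]_(n, n + n)) (rL : 'rV[F]_(n + n) -> 'rV[F]_(n + n)).
Hypothesis omega_alt : forall v, omega Om v v = 0.
Hypotheses (lagN : N *m Om *m N^T = 0) (lagM : M *m Om *m M^T = 0).
Hypothesis lagL : L *m Om *m L^T = 0.
Hypothesis rL_spec : forall m, (m <= M)%MS -> (rL m <= N)%MS /\ (rL m - m <= L)%MS.

(* F_{N,M} o F_{M,L} = C F_{N,L}: factor each (m,0)(v,0) by heisenberg_factor,
   pull the central character value out through f in H_L and re-center v. *)
Lemma Fop_comp (psi : F -> algC) f h : inH Om psi L f ->
  Fop Om N (Fop Om M f) h =
  (\sum_(m : 'rV[F]_(n + n) | (m <= M)%MS) psi (2^-1 * omega Om (rL m) m)) *
  Fop Om N f h.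
Proof.
move=> fH; rewrite /Fop exchange_big mulr_suml; apply: eq_bigr => m mM.
have [rN rmL] := rL_spec mM.
have mrL : (m - rL m <= L)%MS by rewrite -opprB eqmx_opp.
rewrite mulr_sumr [RHS](sum_submx_shift _ rN); apply: eq_bigr => v vN.
by rewrite -hmulA (heisenberg_factor m omega_alt lagN rN vN) hmulA fH.
Qed.

Definition rmx : 'M[F]_(n, n + n) := \matrix_(i < n) rL (row i M).

Lemma rmx_sub : (rmx <= N)%MS.
Proof. by apply/row_subP => i; rewrite rowK; exact: (rL_spec (row_sub i M)).1. Qed.

Lemma rmx_subB : (rmx - M <= L)%MS.
Proof.
by apply/row_subP => i; rewrite linearB /= rowK; exact: (rL_spec (row_sub i M)).2.
Qed.

(* r^L is linear since N and L meet trivially. *)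
Lemma rL_coord (x : 'rV[F]_n) :
  row_free N -> row_free L -> gen_pos N L -> rL (x *m M) = x *m rmx.
Proof.
move=> freeN freeL genNL; have [rxN rxL] := rL_spec (submxMl x M).
apply/eqP; rewrite -subr_eq0; apply/eqP; apply: (gen_pos_cap freeN freeL genNL).
  by rewrite addmx_sub // eqmx_opp (submx_trans (submxMl x _) rmx_sub).
have -> : rL (x *m M) - x *m rmx = (rL (x *m M) - x *m M) - x *m (rmx - M).
  by rewrite mulmxBr opprB addrA subrK.
by rewrite addmx_sub // eqmx_opp (submx_trans (submxMl x _) rmx_subB).
Qed.

Definition gram : 'M[F]_n := rmx *m Om *m M^T.

(* Symmetry: since N, M, L are Lagrangian, expanding (R - M) Om (R - M)^T = 0
   gives R Om M^T = - M Om R^T = (R Om M^T)^T. *)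
Lemma gram_sym : gram^T = gram.
Proof.
have := lagrangian_pair lagL rmx_subB rmx_subB.
rewrite linearB /= !mulmxBl !mulmxBr (lagrangian_pair lagN rmx_sub rmx_sub) lagM.
rewrite sub0r subr0 -/gram => /eqP; rewrite -opprD oppr_eq0 addr_eq0 => /eqP gramE.
rewrite [RHS]gramE /gram !trmx_mul trmxK (tr_Om omega_alt).
by rewrite mulNmx mulmxN mulmxA.
Qed.

(* Nondegeneracy: if x gram = 0 then x R is omega-orthogonal to N + M = V,
   so x R = 0; then x M lies in M and in L, hence x = 0. *)
Lemma gram_unit :
  Om \in unitmx -> row_free M -> row_free L -> gen_pos N M -> gen_pos M L ->
  gram \in unitmx.
Proof.
move=> uOm freeM freeL genNM genML.
rewrite -row_free_unit; apply: inj_row_free => x xG.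
have xRN : (x *m rmx <= N)%MS := submx_trans (submxMl x _) rmx_sub.
have xRorth (y : 'rV[F]_(n + n)) : x *m rmx *m Om *m y^T = 0.
  have /sub_addsmxP[[u w] /= ->] : (y <= N + M)%MS by rewrite (eqP genNM) submx1.
  rewrite linearD /= !trmx_mul mulmxDr !mulmxA (lagrangian_pair lagN xRN (submx_refl N)).
  by rewrite -(mulmxA x) -(mulmxA x) -/gram xG !mul0mx addr0.
have xROm : x *m rmx *m Om = 0.
  apply/rowP => j; have := xRorth (delta_mx 0 j); rewrite trmx_delta -colE.
  by move/matrixP => /(_ 0 0); rewrite !mxE.
have xR0 : x *m rmx = 0 by rewrite -[x *m rmx](mulmxK uOm) xROm mul0mx.
have xML : (x *m M <= L)%MS.
  have -> : x *m M = x *m rmx - x *m (rmx - M) by rewrite mulmxBr opprB addrC subrK.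
  by rewrite xR0 sub0r eqmx_opp (submx_trans (submxMl x _) rmx_subB).
apply/eqP; rewrite -(mulmx_free_eq0 _ freeM).
by rewrite (gen_pos_cap freeM freeL genML (submxMl x M) xML).
Qed.

Lemma const_quad_sum (psi : F -> algC) :
  row_free M -> row_free N -> row_free L -> gen_pos N L ->
  \sum_(m : 'rV[F]_(n + n) | (m <= M)%MS) psi (2^-1 * omega Om (rL m) m) =
  quad_sum psi gram.
Proof.
move=> freeM freeN freeL genNL; rewrite (sum_submx_coord _ freeM).
by apply: eq_bigr => x _; rewrite rL_coord // /omega /gram trmx_mul !mulmxA.
Qed.

End LagrangianTriple.

Theorem mainTheorem2 (F : finFieldType) (n : nat) (Om : 'M[F]_(n + n))
  (psi : F -> algC) (N M L : 'M[F]_(n, n + n))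
  (rL : 'rV[F]_(n + n) -> 'rV[F]_(n + n)) :
  ~~ (2 \in [pchar F]) ->
  symplectic_form Om ->
  nontrivial_char psi ->
  olag Om N -> olag Om M -> olag Om L ->
  gen_pos N M -> gen_pos M L -> gen_pos N L ->
  (forall m, (m <= M)%MS -> (rL m <= N)%MS /\ (rL m - m <= L)%MS) ->
  let C := \sum_(m : 'rV[F]_(n + n) | (m <= M)%MS) psi (2^-1 * omega Om (rL m) m) in
  (forall f, inH Om psi L f ->
     forall h, Fop Om N (Fop Om M f) h = C * Fop Om N f h)
  /\ C = G1 psi ^+ n *
         legendre (sgnk F n * omega_wedge Om (\matrix_(i < n) rL (row i M)) M).
Proof.
move=> char2 [alt detOm] psi_char [freeN lagN] [freeM lagM] [freeL lagL]
  genNM genML genNL rL_spec C.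
have two_neq0 : (2 : F) != 0 by move: char2; rewrite inE.
have uOm : Om \in unitmx by rewrite unitmxE unitfE.
split=> [f fH h|]; first exact: (Fop_comp alt lagN rL_spec).
have symG := gram_sym alt lagN lagM lagL rL_spec.
have uG : gram Om M rL \in unitmx by apply: (gram_unit lagN rL_spec).
rewrite /C (const_quad_sum Om rL_spec) // quad_sum_eval //.
by rewrite /omega_wedge sgnk_involutive.
Qed.
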